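(* Consider any fair, well-formed execution of COP as described in the context, with history $\sigma$ (and $S$ correct or Byzantine). For each client $C_i$, the sequence $\pi_i$ defined in the context preserves the real-time order of $\sigma$: for any two operations $o,o'$ in $\pi_i$, if $o$ completes before $o'$ is invoked in $\sigma$, then $o$ appears before $o'$ in $\pi_i$.
   Context: System model. Clients $C_1,\dots,C_n$ and server $S$ in an asynchronous system, each client connected to $S$ by a reliable FIFO channel; clients are correct; $S$ is correct or Byzantine (may send arbitrary messages). Executions are fair and well-formed. Functionality. $F$ is deterministic over states $\mathcal{S}$, operations $\mathcal{O}$, responses $\mathcal{R}$: $F(s,o)=(s',r)$, extended to sequences by applying operations in order. $\mathrm{commute}_F(s,\rho_1,\rho_2)$ is true iff every interleaving of sequences $\rho_1,\rho_2$ (preserving each one's internal order) executed from $s$ yields the same final state and the same respective responses. Cryptography (ideal). $\mathrm{hash}$ is ideal collision-free; $\mathrm{sign}_i$ is invocable only by $C_i$ and $\mathrm{verify}_i(\phi,m)$ is true iff $C_i$ previously executed $\mathrm{sign}_i(m)$ obtaining $\phi$. $\|$ is concatenation. COP client $C_i$. State: $u$ (initially $\bot$); $c$ (initially $0$); map $H$ with $H[0]=\mathrm{null}$; map $Z$ to $\{\mathrm{success},\mathrm{abort}\}$; state $s$ (initially $s_0$). (1) On invocation of $o$: $u\leftarrow o$, send $\langle\mathrm{invoke},o,c,\mathrm{sign}_i(\mathrm{invoke}\|o\|i)\rangle$ to $S$. (2) On $\langle\mathrm{reply},\omega\rangle$: $\gamma,\mu\leftarrow\langle\rangle$. For $k=1,\dots,\mathrm{length}(\omega)$: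 $(o,j,\tau)=\omega[k]$, $l=c+k$; halt if $\mathrm{verify}_j(\tau,\mathrm{invoke}\|o\|j)$ fails; if $H[l]$ undefined set $H[l]\leftarrow\mathrm{hash}(H[l-1]\|o\|l\|j)$, else halt if $H[l]\neq\mathrm{hash}(H[l-1]\|o\|l\|j)$; if $j=i$ and $Z[l]=\mathrm{success}$ append $o$ to $\mu$, else if $j\neq i$ append $o$ to $\gamma$. Halt if $\omega$ is empty or its last entry has operation $\neq u$ or index $\neq i$. $(a,r)\leftarrow F(s,\mu)$. If $\mathrm{commute}_F(a,\langle u\rangle,\gamma)$: $(a,r)\leftarrow F(a,u)$, $Z[l]\leftarrow\mathrm{success}$; else $r\leftarrow\bot$, $Z[l]\leftarrow\mathrm{abort}$. Send $\langle\mathrm{commit},u,l,H[l],Z[l],\mathrm{sign}_i(\mathrm{commit}\|u\|l\|H[l]\|Z[l])\rangle$ to $S$, set $u\leftarrow\bot$, output $r$. (3) On $\langle\mathrm{broadcast},o,q,h,z,\phi,j\rangle$: halt unless $q=c+1$ and $\mathrm{verify}_j(\phi,\mathrm{commit}\|o\|q\|h\|z)$; if $H[q]$ undefined set $H[q]\leftarrow\mathrm{hash}(H[q-1]\|o\|q\|j)$; halt if $h\neq H[q]$; if $z=\mathrm{success}$, $(s,\cdot)\leftarrow F(s,o)$; $c\leftarrow c+1$. COP server $S$ (when correct). State $t=0$, $b=0$, maps $I,O$ empty. On $\langle\mathrm{invoke},o,c,\tau\rangle$ from $C_i$: $t\leftarrow t+1$, $I[t]\leftarrow(o,i,\tau)$,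 send $\langle\mathrm{reply},\langle I[c+1],\dots,I[t]\rangle\rangle$ to $C_i$. On $\langle\mathrm{commit},o,q,h,z,\phi\rangle$ from $C_i$: $O[q]\leftarrow(o,h,z,\phi,i)$; while $O[b+1]$ defined: $b\leftarrow b+1$, send $\langle\mathrm{broadcast},o',b,h',z',\phi',j\rangle$ to all clients where $(o',h',z',\phi',j)=O[b]$. Terminology. The history $\sigma$ is the sequence of invocation/response events at the clients. $C_i$ commits $o$ when it issues the commit signature in step (2); the value $l$ there is the sequence number of $o$. A client confirms $o$ when it processes a broadcast message for $o$ in step (3) passing all checks. Definition of $\pi_i$: let $o$ be the operation committed by $C_i$ with the highest sequence number among those operations of $C_i$ that have been confirmed by some client $C_k$ (possibly $C_k=C_i$); let $\alpha_i$ be the sequence of operations confirmed by $C_k$ up to and including $o$; let $\beta_i$ be the sequence of operations committed by $C_i$ with sequence number higher than that of $o$, in order of sequence number; $\pi_i=\alpha_i\circ\beta_i$ (concatenation). *)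

(* A symbolic model of the COP protocol (clients correct,
   server Byzantine = completely arbitrary), with ideal hash (free term
   constructor, hence collision-free) and ideal signatures (symbolic, checked
   against the global log of signatures produced so far). *)
From mathcomp Require Import all_boot.
From Stdlib Require List.

Set Implicit Arguments.
Unset Strict Implicit.
Unset Printing Implicit Defensive.

Section COP.

Variable n : nat.
Variable Op : eqType.
Variables St Rsp : Type.
Variable F : St -> Op -> St * Rsp.
Variable s0 : St.

Definition client := 'I_n.

Fixpoint Fseq (s : St) (rho : seq Op) : St * seq Rsp :=
  match rho with
  | [::] => (s, [::])
  | o :: rho' => let (s1, r) := F s o in
                 let (s2, rs) := Fseq s1 rho' in (s2, r :: rs)
  end.

(* Execute an interleaving of rho1 and rho2 given by a schedule
   (true = next op of rho1, false = next op of rho2); returns the final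
   state and the respective responses of rho1 and rho2. *)
Fixpoint run_sched (s : St) (sch : seq bool) (rho1 rho2 : seq Op)
  : St * seq Rsp * seq Rsp :=
  match sch with
  | [::] => (s, [::], [::])
  | true :: sch' =>
      match rho1 with
      | [::] => (s, [::], [::])
      | o :: rho1' => let (s1, r) := F s o in
          let '(s2, r1, r2) := run_sched s1 sch' rho1' rho2 in (s2, r :: r1, r2)
      end
  | false :: sch' =>
      match rho2 with
      | [::] => (s, [::], [::])
      | o :: rho2' => let (s1, r) := F s o in
          let '(s2, r1, r2) := run_sched s1 sch' rho1 rho2' in (s2, r1, r :: r2)
      end
  end.

Definition interleaving (sch : seq bool) (rho1 rho2 : seq Op) : Prop :=
  count id sch = size rho1 /\ count negb sch = size rho2.

Definition commuteF (s : St) (rho1 rho2 : seq Op) : Prop :=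
  forall sch sch', interleaving sch rho1 rho2 -> interleaving sch' rho1 rho2 ->
    run_sched s sch rho1 rho2 = run_sched s sch' rho1 rho2.

Inductive zval := Zsuccess | Zabort.

(* ideal (collision-free) hash values: hash(H[l-1] || o || l || j).
   H[l-1] may in principle be undefined, hence the option. *)
Inductive hval :=
| Hnull
| Hash of option hval & Op & nat & client.

(* signed messages: invoke||o||i  and  commit||o||l||h||z *)
Inductive payload :=
| PInv of Op & client
| PCom of Op & nat & option hval & zval.

(* ideal signature: sign_j(m) yields the symbolic value (j, m) *)
Definition sigval := (client * payload)%type.

(* verify_j(phi, m): C_j previously executed sign_j(m) obtaining phi *)
Definition verify (log : seq sigval) (j : client) (phi : sigval) (m : payload) : Prop :=
  phi = (j, m) /\ List.In (j, m) log.

Inductive smsg :=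
| MReply of seq (Op * client * sigval)
| MBcast of Op & nat & option hval & zval & sigval & client.

Record cstate := CState {
  cu : option Op;                (* u, None = bottom *)
  cc : nat;
  cH : nat -> option hval;
  cZ : nat -> option zval;
  cs : St;
  chalt : bool
}.

Definition cinit : cstate :=
  CState None 0 (fun l => if l == 0 then Some Hnull else None) (fun _ => None) s0 false.

Definition upd {A} (f : nat -> A) (l : nat) (v : A) : nat -> A :=
  fun x => if x == l then v else f x.

(* The loop of step (2), for k = k0, k0+1, ... : returns the updated H,
   gamma, mu, and the conjunction of all checks (a failing check = halt). *)
Fixpoint scan (i : client) (log : seq sigval) (c k : nat)
  (H : nat -> option hval) (Z : nat -> option zval) (w : seq (Op * client * sigval))
  : (nat -> option hval) * seq Op * seq Op * Prop :=
  match w with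
  | [::] => (H, [::], [::], True)
  | (o, j, tau) :: w' =>
      let l := c + k in
      let hl := Hash (H (l - 1)) o l j in
      let ok1 := verify log j tau (PInv o j) /\ (forall x, H l = Some x -> x = hl) in
      let H1 := if H l is None then upd H l (Some hl) else H in
      let '(H', g, m, ok') := scan i log c k.+1 H1 Z w' in
      let g' := if j == i then g else o :: g in
      let m' := if (j == i) && (if Z l is Some Zsuccess then true else false)
                then o :: m else m in
      (H', g', m', ok1 /\ ok')
  end.

Inductive obs :=
| OInv of client & Op
| ORes of client & Op & option Rsp
| OCommit of client & Op & nat
| OConfirm of client & Op & nat & client. (* C_k confirms o (seq q, committer j) *)

Record world := World { wcl : client -> cstate; wlog : seq sigval }.

Definition winit : world := World (fun _ => cinit) [::].

Definition setcl (w : world) (i : client) (st : cstate) (log : seq sigval) : world :=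
  World (fun x => if x == i then st else wcl w x) log.

Inductive step : world -> world -> seq obs -> Prop :=
(* (1) invocation (well-formed: only when the previous op completed) *)
| StInvoke w i o :
    cu (wcl w i) = None ->
    let st := wcl w i in
    step w (setcl w i (CState (Some o) (cc st) (cH st) (cZ st) (cs st) (chalt st))
                 (if chalt st then wlog w else rcons (wlog w) (i, PInv o i)))
         [:: OInv i o]
| StReply w i om u tau z r H' g m (ok : Prop) :
    let st := wcl w i in
    chalt st = false ->
    scan i (wlog w) (cc st) 1 (cH st) (cZ st) (rcons om (u, i, tau)) = (H', g, m, ok) ->
    ok ->
    cu st = Some u ->
    let l := cc st + size (rcons om (u, i, tau)) in
    let a := (Fseq (cs st) m).1 in
    (commuteF a [:: u] g /\ z = Zsuccess /\ r = Some (F a u).2) \/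
    (~ commuteF a [:: u] g /\ z = Zabort /\ r = None) ->
    step w (setcl w i (CState None (cc st) H' (upd (cZ st) l (Some z)) (cs st) false)
                 (rcons (wlog w) (i, PCom u l (H' l) z)))
         [:: OCommit i u l; ORes i u r]
| StReplyHalt w i om H' g m (ok : Prop) :
    let st := wcl w i in
    chalt st = false ->
    scan i (wlog w) (cc st) 1 (cH st) (cZ st) om = (H', g, m, ok) ->
    ~ (ok /\ exists om' u tau, om = rcons om' (u, i, tau) /\ cu st = Some u) ->
    step w (setcl w i (CState (cu st) (cc st) (cH st) (cZ st) (cs st) true) (wlog w)) [::]
| StBcast w i o q h z phi j :
    let st := wcl w i in
    chalt st = false ->
    q = cc st + 1 ->
    verify (wlog w) j phi (PCom o q h z) ->
    let H1 := if cH st q is None then upd (cH st) q (Some (Hash (cH st (q - 1)) o q j))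
              else cH st in
    h = H1 q ->
    step w (setcl w i (CState (cu st) q H1 (cZ st)
                          (if z is Zsuccess then (F (cs st) o).1 else cs st) false) (wlog w))
         [:: OConfirm i o q j]
| StBcastHalt w i o q h z phi j :
    let st := wcl w i in
    chalt st = false ->
    ~ (q = cc st + 1 /\ verify (wlog w) j phi (PCom o q h z) /\
       h = (if cH st q is None then upd (cH st) q (Some (Hash (cH st (q - 1)) o q j))
            else cH st) q) ->
    step w (setcl w i (CState (cu st) (cc st) (cH st) (cZ st) (cs st) true) (wlog w)) [::].

Inductive reachable : world -> seq obs -> Prop :=
| Reach0 : reachable winit [::]
| ReachStep w tr w' ev : reachable w tr -> step w w' ev -> reachable w' (tr ++ ev).

Definition invoked_ops (tr : seq obs) : seq Op :=
  pmap (fun e => if e is OInv _ o then Some o else None) tr.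

Definition completes_before (tr : seq obs) (o o' : Op) : Prop :=
  exists tr1 tr2 tr3 i j r, tr = tr1 ++ ORes i o r :: tr2 ++ OInv j o' :: tr3.

Definition committed (tr : seq obs) (i : client) (o : Op) (l : nat) : Prop :=
  List.In (OCommit i o l) tr.

Definition confirmed_by (tr : seq obs) (k : client) (o : Op) : Prop :=
  exists q j, List.In (OConfirm k o q j) tr.

Definition confirms (tr : seq obs) (k : client) : seq Op :=
  pmap (fun e => if e is OConfirm k' o _ _ then (if k' == k then Some o else None)
                 else None) tr.

Definition commits_of (tr : seq obs) (i : client) : seq (Op * nat) :=
  pmap (fun e => if e is OCommit i' o l then (if i' == i then Some (o, l) else None)
                 else None) tr.

Definition commits_sorted (tr : seq obs) (i : client) (P : nat -> bool) : seq Op :=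
  map fst (sort (fun a b : Op * nat => a.2 <= b.2)
                (filter (fun a : Op * nat => P a.2) (commits_of tr i))).

(* pi_i (relational: any admissible choice of o and C_k) *)
Definition cop_pi (tr : seq obs) (i : client) (pi : seq Op) : Prop :=
  (exists o l k,
     committed tr i o l /\ confirmed_by tr k o /\
     (forall o2 l2 k2, committed tr i o2 l2 -> confirmed_by tr k2 o2 -> l2 <= l) /\
     pi = take (index o (confirms tr k)).+1 (confirms tr k)
          ++ commits_sorted tr i (fun l2 => l < l2))
  \/
  ((forall o2 l2 k2, committed tr i o2 l2 -> ~ confirmed_by tr k2 o2) /\
   pi = commits_sorted tr i (fun _ => true)).

End COP.

From mathcomp Require Import all_boot zify.
From Stdlib Require List.

Set Implicit Arguments.
Unset Strict Implicit.
Unset Printing Implicit Defensive.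

(* Every signature a client produces is matched, in the same order, by an event of the
   trace, and each commit event is immediately followed by the response of the committed
   operation.  Hashes are collision-free, so a commit signature for sequence number l
   certifies a whole prefix of l operations, each of which was signed at its invocation
   before that commit.  If o completes before o' is invoked, then o' is signed after the
   commit of o, so o' lies in no prefix certified by a commit signed no later than o's.
   In pi_i = alpha_i ++ beta_i, alpha_i is certified by the confirmation of its last
   element, and beta_i lists commits of C_i, whose sequence numbers grow with time. *)

Section SeqFacts.
Variable T : Type.
Implicit Types (s : seq T) (x y : T).

Lemma In_onth s x : List.In x s <-> exists t, onth s t = Some x.
Proof.
elim: s => [|z s IH] /=; first by split=> // -[t]; rewrite onth0n.
split.
- case=> [->|/IH [t Ht]]; first by exists 0.
  by exists t.+1.
- case=> [[|t]] /=; first by case=> ->; left.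
  by move=> Ht; right; apply/IH; exists t.
Qed.

Lemma In_cat s1 s2 x : List.In x (s1 ++ s2) <-> List.In x s1 \/ List.In x s2.
Proof.
elim: s1 => [|z s1 IH] /=; first by split=> [|[]//]; right.
by rewrite IH; tauto.
Qed.

Lemma In_catl s1 s2 x : List.In x s1 -> List.In x (s1 ++ s2).
Proof. by move=> H; apply/In_cat; left. Qed.

Lemma In_rcons s x y : List.In y (rcons s x) <-> List.In y s \/ y = x.
Proof. by rewrite -cats1 In_cat /=; intuition. Qed.

Lemma In_rconsl s x y : List.In y s -> List.In y (rcons s x).
Proof. by move=> H; apply/In_rcons; left. Qed.

Lemma In_cat1P s x y : List.In y (s ++ [:: x]) -> List.In y s \/ y = x.
Proof. by rewrite cats1 => /In_rcons. Qed.

Lemma In_cat2P s x1 x2 y : List.In y (s ++ [:: x1; x2]) ->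
  List.In y s \/ y = x1 \/ y = x2.
Proof. by case/In_cat=> [|[->|[->|[]]]]; tauto. Qed.

Lemma onth_lt s t x : onth s t = Some x -> t < size s.
Proof. by move=> H; rewrite -onthTE H. Qed.

Lemma onth_catl s1 s2 t x : onth s1 t = Some x -> onth (s1 ++ s2) t = Some x.
Proof. by move=> H; rewrite onth_cat (onth_lt H). Qed.

Lemma onth_rconsl s x t y : onth s t = Some y -> onth (rcons s x) t = Some y.
Proof. by rewrite -cats1; apply: onth_catl. Qed.

Lemma onth_cat_size s1 s2 x : onth (s1 ++ x :: s2) (size s1) = Some x.
Proof. by rewrite onth_cat ltnn subnn. Qed.

Lemma onth_rcons_size s x : onth (rcons s x) (size s) = Some x.
Proof. by rewrite -cats1 onth_cat_size. Qed.

Lemma onth_rconsP s x t y : onth (rcons s x) t = Some y ->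
  onth s t = Some y \/ (t = size s /\ y = x).
Proof.
rewrite -cats1 onth_cat; case: ltnP => [_|Hle]; first by left.
case E: (t - size s) => [|k] /=; last by rewrite onth0n.
by case=> <-; right; split=> //; lia.
Qed.

Lemma onth_cat1P s x t y : onth (s ++ [:: x]) t = Some y ->
  onth s t = Some y \/ (t = size s /\ y = x).
Proof. by rewrite cats1; apply: onth_rconsP. Qed.

Lemma onth_cat2P s x1 x2 t y : onth (s ++ [:: x1; x2]) t = Some y ->
  onth s t = Some y \/ (t = size s /\ y = x1) \/ (t = (size s).+1 /\ y = x2).
Proof.
rewrite onth_cat; case: ltnP => [_|Hle]; first by left.
case E: (t - size s) => [|[|k]] /=; last by rewrite onth0n.
- by case=> <-; right; left; split=> //; lia.
- by case=> <-; right; right; split=> //; lia.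
Qed.

Lemma take_rcons_le s x l : l <= size s -> take l (rcons s x) = take l s.
Proof. by move=> H; rewrite -cats1 takel_cat. Qed.

Lemma take_prefix s s' l : take (size s) s' = s -> l <= size s -> take l s' = take l s.
Proof. by move=> Hs Hl; rewrite -Hs take_takel. Qed.

Lemma size_prefix s s' : take (size s) s' = s -> size s <= size s'.
Proof. by move=> Hs; rewrite -Hs size_take_min geq_minr. Qed.

Lemma take_rcons_last s l : 0 < l <= size s -> exists x, take l s = rcons (take l.-1 s) x.
Proof.
case: s => [|z s] /andP [Hl Hs]; first by rewrite /= in Hs; lia.
exists (nth z (z :: s) l.-1).
by rewrite -(take_nth z) ?prednK //; lia.
Qed.

End SeqFacts.

Lemma mem_rcons_self (T : eqType) (s : seq T) x : x \in rcons s x.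
Proof. by rewrite mem_rcons mem_head. Qed.

Lemma index_take_in (T : eqType) (x : T) m s : x \in take m s -> index x (take m s) = index x s.
Proof. by move=> H; rewrite -{2}(cat_take_drop m s) index_cat H. Qed.

Lemma index_lt_of_not_gt (T : eqType) (x y : T) (s : seq T) :
  x \in s -> y \in s -> x <> y ->
  ~ index y s < index x s -> index x s < index y s.
Proof.
move=> Hx Hy Hne Hgt; case: (ltngtP (index x s) (index y s)) => [//|/Hgt []|E].
by case: Hne; exact: (index_inj x Hx Hy E).
Qed.
Section COPProof.
Variables (n : nat) (Op : eqType).
Notation cl := (client n).
Notation hv := (hval n Op).

Fixpoint rchain (s : seq (Op * cl)) : hv :=
  match s with
  | [::] => Hnull _ _
  | x :: s' => Hash (Some (rchain s')) x.1 (size s').+1 x.2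
  end.

(* [chain V] is the value of [H[size V]] for a client that has accepted exactly the
   entries of V, in order, into its hash chain. *)
Definition chain (s : seq (Op * cl)) := rchain (rev s).

Lemma chain_rcons s x : chain (rcons s x) = Hash (Some (chain s)) x.1 (size s).+1 x.2.
Proof. by rewrite /chain rev_rcons /= size_rev. Qed.

Lemma rchain_inj : injective rchain.
Proof.
elim=> [|x s IH] [|y t] //= [] E1 E2 _ E3.
by rewrite (IH _ E1); case: x y E2 E3 {E1} => ? ? [? ?] /= -> ->.
Qed.

Lemma chain_inj : injective chain.
Proof. by move=> s t /rchain_inj E; rewrite -(revK s) E revK. Qed.

Definition chain_view (H : nat -> option hv) (V : seq (Op * cl)) :=
  forall l, H l = if l <= size V then Some (chain (take l V)) else None.

Lemma chain_view_le H V l y : chain_view H V -> H l = Some y -> l <= size V.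
Proof. by move=> HV; rewrite HV; case: ifP. Qed.

Lemma chain_view_mono H V H' V' q y : chain_view H V -> chain_view H' V' ->
  take (size V) V' = V -> H q = Some y -> H' q = Some y.
Proof.
move=> HV HV' Hpre Hq; have Hle := chain_view_le HV Hq.
by rewrite HV' (leq_trans Hle (size_prefix Hpre)) (take_prefix Hpre Hle) -Hq HV Hle.
Qed.

(* The update performed on [H] by steps (2) and (3) for an entry (o, j) at position l. *)
Lemma chain_view_extend H V l o j : chain_view H V -> 0 < l <= (size V).+1 ->
  chain_view (if H l is None then upd H l (Some (Hash (H (l - 1)) o l j)) else H)
             (if l <= size V then V else rcons V (o, j)).
Proof.
move=> HV Hl; rewrite (HV l); case: ifP => // Hls.
have El : l = (size V).+1 by lia.
move=> x; rewrite /upd size_rcons (HV (l - 1)) El subn1 /= leqnn take_size.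
case: eqP => [->|Hx]; first by rewrite leqnn take_oversize ?size_rcons // chain_rcons.
rewrite HV; case: (ltngtP x (size V).+1) Hx => // Hx _.
- by rewrite ltnS in Hx; rewrite Hx take_rcons_le.
- by have -> : (x <= size V) = false by lia.
Qed.

Lemma chain_view_last H V l o j : chain_view H V -> 0 < l <= size V ->
  (forall x, H l = Some x -> x = Hash (H (l - 1)) o l j) ->
  take l V = rcons (take l.-1 V) (o, j).
Proof.
move=> HV Hl Hchk; have [[a b] Ex] := take_rcons_last Hl.
have Hl' : l <= size V by case/andP: Hl.
move: (HV l); rewrite Hl' => /Hchk; rewrite Ex chain_rcons (HV (l - 1)) subn1.
by rewrite (leq_trans (leq_pred l) Hl') => -[-> _ ->].
Qed.

Definition signed_invoke (log : seq (sigval n Op)) (x : Op * cl) :=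
  List.In (x.2, PInv x.1 x.2) log.

Lemma scan_view i log c w : forall k H Z V H' g m ok,
  chain_view H V -> c + k <= (size V).+1 -> 0 < k ->
  (forall x, x \in V -> signed_invoke log x) ->
  scan i log c k H Z w = (H', g, m, ok) -> ok ->
  exists V', [/\ chain_view H' V', take (size V) V' = V, (c + k).-1 + size w <= size V',
     (forall x, x \in V' -> signed_invoke log x) &
     (forall mm o j tau, onth w mm = Some (o, j, tau) ->
        take (c + k + mm) V' = rcons (take (c + k + mm).-1 V') (o, j))].
Proof.
elim: w => [|[[o j] tau] w IH] k H Z V H' g m ok HV Hck Hk HP /=.
  case=> <- _ _ _ _; exists V; split=> //; first by rewrite take_size.
  - by rewrite addn0; lia.
  - by move=> ? ? ? ?; rewrite onth0n.
set l := c + k.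
case E: (scan _ _ _ _ _ _ _) => [[[H2 g2] m2] ok2] [<- _ _ <-] [[[_ Hsig] Hchk] Hok2].
have Hl : 0 < l <= (size V).+1 by rewrite /l; lia.
set V1 := if l <= size V then V else rcons V (o, j).
have HV1 := chain_view_extend o j HV Hl; rewrite -/V1 in HV1.
have HVV1 : take (size V) V1 = V.
  by rewrite /V1; case: ifP => _; rewrite ?take_rcons_le // take_size.
have HlV1 : l <= size V1 by rewrite /V1; case: ifP => // _; rewrite size_rcons; lia.
have Hlast : take l V1 = rcons (take l.-1 V1) (o, j).
  rewrite /V1; case: ifP => Hls; first by apply: chain_view_last HV _ Hchk; lia.
  have El : l = (size V).+1 by lia.
  by rewrite El /= take_oversize ?size_rcons // take_rcons_le // take_size.
have HP1 : forall x, x \in V1 -> signed_invoke log x.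
  rewrite /V1; case: ifP => _ x; first exact: HP.
  by rewrite mem_rcons inE => /orP [/eqP -> //|/HP].
have [|V' [HV' Hpre Hsize HP' Hpos]] := IH k.+1 _ Z V1 _ _ _ _ HV1 _ (ltn0Sn _) HP1 E Hok2.
  by rewrite addnS.
exists V'; split=> //.
- by rewrite (take_prefix Hpre (size_prefix HVV1)) HVV1.
- by move: Hsize; rewrite /l; lia.
- case=> [|mm] o' j' tau' /=.
  + case=> <- <- _; rewrite addn0 (take_prefix Hpre HlV1) Hlast.
    by rewrite (take_prefix Hpre (leq_trans (leq_pred l) HlV1)).
  + by move=> /Hpos; rewrite /l !addnS addSn.
Qed.

Variables (St Rsp : Type) (F : St -> Op -> St * Rsp) (s0 : St).
Notation sv := (sigval n Op).
Notation obsT := (obs n Op Rsp).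
Notation wT := (world n Op St).

Lemma invoked_ops_In (tr : seq obsT) j x : List.In (OInv Rsp j x) tr -> x \in invoked_ops tr.
Proof.
elim: tr => [|e tr IH] //= [-> /=|/IH]; first by rewrite inE eqxx.
by case: e => //= *; rewrite inE; apply/orP; right.
Qed.

Lemma uniq_invoked_catl (tr ev : seq obsT) :
  uniq (invoked_ops (tr ++ ev)) -> uniq (invoked_ops tr).
Proof. by rewrite /invoked_ops pmap_cat cat_uniq => /andP []. Qed.

Lemma invoke_pos_uniq (tr : seq obsT) a b j j' x : uniq (invoked_ops tr) ->
  onth tr a = Some (OInv Rsp j x) -> onth tr b = Some (OInv Rsp j' x) -> a = b.
Proof.
have notin e (s : seq obsT) t k k' y : uniq (invoked_ops (e :: s)) ->
    e = OInv Rsp k y -> onth s t = Some (OInv Rsp k' y) -> False.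
  move=> Hu Ee Ht; subst e; move: Hu => /= /andP [/negP []].
  by apply: (invoked_ops_In (j := k')); apply/In_onth; exists t.
elim: tr a b => [|e tr IH] [|a] [|b] //= Hu; try by rewrite onth0n.
- by case=> Ea /(notin _ _ _ _ _ _ Hu Ea).
- by move=> Ha [Eb]; case: (notin _ _ _ _ _ _ Hu Eb Ha).
- move=> Ha Hb; rewrite (IH a b _ Ha Hb) //.
  by case: e Hu => //= ? ? /andP [].
Qed.

Lemma invoke_client_uniq (tr : seq obsT) j j' x : uniq (invoked_ops tr) ->
  List.In (OInv Rsp j x) tr -> List.In (OInv Rsp j' x) tr -> j = j'.
Proof.
move=> Hu /In_onth [a Ha] /In_onth [b Hb].
have E := invoke_pos_uniq Hu Ha Hb; subst b.
by rewrite Ha in Hb; case: Hb.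
Qed.

Lemma invoke_fresh (tr : seq obsT) i j x :
  uniq (invoked_ops (tr ++ [:: OInv Rsp i x])) -> ~ List.In (OInv Rsp j x) tr.
Proof.
rewrite /invoked_ops pmap_cat cat_uniq /= orbF => /and3P [_ Hx _] /invoked_ops_In Hin.
by move: Hx; rewrite Hin.
Qed.

Definition sig_event (e : sv) (e' : obsT) : Prop :=
  match e with
  | (j, PInv x j0) => j0 = j /\ e' = OInv Rsp j x
  | (j, PCom o l _ _) => e' = OCommit Rsp j o l
  end.

(* phi locates in the trace the client step that produced each signature. *)
Definition log_embeds (log : seq sv) (tr : seq obsT) :=
  exists phi : nat -> nat,
    (forall t e, onth log t = Some e -> exists e', onth tr (phi t) = Some e' /\ sig_event e e') /\
    (forall t1 t2, t1 < t2 -> t2 < size log -> phi t1 < phi t2).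

Lemma log_embeds_catr log tr ev : log_embeds log tr -> log_embeds log (tr ++ ev).
Proof.
case=> phi [H1 H2]; exists phi; split=> // t e /H1 [e' [He' Hk]].
by exists e'; rewrite (onth_catl _ He').
Qed.

Lemma log_embeds_rcons log tr ev x e' : log_embeds log tr -> onth ev 0 = Some e' ->
  sig_event x e' -> log_embeds (rcons log x) (tr ++ ev).
Proof.
case=> phi [H1 H2] Hev Hk.
exists (fun t => if t < size log then phi t else size tr); split.
- move=> t e He; case: (onth_rconsP He) => [Ht|[-> ->]].
  + rewrite (onth_lt Ht); have [e1 [He1 Hk1]] := H1 _ _ Ht.
    by exists e1; rewrite (onth_catl _ He1).
  + by rewrite ltnn; exists e'; rewrite onth_cat ltnn subnn.
- move=> t1 t2 Hlt; rewrite size_rcons ltnS => Hle.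
  have Ht1 : t1 < size log by apply: leq_trans Hlt Hle.
  rewrite Ht1; case: (ltnP t2 (size log)) => Ht2; first exact: H2 Hlt Ht2.
  case E: (onth log t1) => [e|]; last by move: Ht1; rewrite -onthTE E.
  by have [e1 [He1 _]] := H1 _ _ E; exact: onth_lt He1.
Qed.

Lemma invoke_sig_pos_uniq log (tr : seq obsT) t1 t2 j j' x :
  log_embeds log tr -> uniq (invoked_ops tr) ->
  onth log t1 = Some (j, PInv x j) -> onth log t2 = Some (j', PInv x j') -> t1 = t2.
Proof.
case=> phi [H1 H2] Hu E1 E2.
have [e1 [F1 [_ K1]]] := H1 _ _ E1; have [e2 [F2 [_ K2]]] := H1 _ _ E2.
subst e1 e2; have Eq := invoke_pos_uniq Hu F1 F2.
case: (ltngtP t1 t2) => // Hlt; exfalso.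
- by have := H2 _ _ Hlt (onth_lt E2); rewrite Eq ltnn.
- by have := H2 _ _ Hlt (onth_lt E1); rewrite Eq ltnn.
Qed.

Definition confirms_seq (tr : seq obsT) (k : cl) : seq (Op * nat) :=
  pmap (fun e => if e is OConfirm k' o q _ then (if k' == k then Some (o, q) else None)
                 else None) tr.

Lemma confirms_seq_cat tr ev k :
  confirms_seq (tr ++ ev) k = confirms_seq tr k ++ confirms_seq ev k.
Proof. by rewrite /confirms_seq pmap_cat. Qed.

Definition commits_certify (log : seq sv) (i : cl) (V : seq (Op * cl)) :=
  forall t a la h z, onth log t = Some (i, PCom a la h z) ->
    la <= size V /\ h = Some (chain (take la V)).

Lemma commits_certify_prefix log i V V' : take (size V) V' = V ->
  commits_certify log i V -> commits_certify log i V'.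
Proof.
move=> Hpre Hcert t a la h z /Hcert [Hla ->].
by rewrite (take_prefix Hpre Hla); split=> //; exact: leq_trans Hla (size_prefix Hpre).
Qed.

Record cop_inv (w : wT) (tr : seq obsT) : Prop := {
  inv_embed : log_embeds (wlog w) tr;
  inv_commit_pos_uniq : forall a b j1 j2 x l1 l2, onth tr a = Some (OCommit Rsp j1 x l1) ->
    onth tr b = Some (OCommit Rsp j2 x l2) -> a = b;
  inv_committed_not_pending : forall j x l i,
    List.In (OCommit Rsp j x l) tr -> cu (wcl w i) <> Some x;
  inv_pending_invoked : forall i x, cu (wcl w i) = Some x -> List.In (OInv Rsp i x) tr;
  inv_committed_invoked : forall j x l,
    List.In (OCommit Rsp j x l) tr -> List.In (OInv Rsp j x) tr;
  inv_res_after_commit : forall a i o r, onth tr a = Some (ORes i o r) ->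
    exists l, 0 < a /\ onth tr a.-1 = Some (OCommit Rsp i o l);
  inv_view : forall i, exists V, [/\ cc (wcl w i) <= size V, chain_view (cH (wcl w i)) V,
    (forall x, x \in V -> signed_invoke (wlog w) x) & commits_certify (wlog w) i V];
  inv_commit_chain : forall t j o l h z, onth (wlog w) t = Some (j, PCom o l h z) ->
    exists L, [/\ 0 < l, size L = l.-1, h = Some (chain (rcons L (o, j))) &
      forall x, x \in rcons L (o, j) ->
        exists t', t' < t /\ onth (wlog w) t' = Some (x.2, PInv x.1 x.2)];
  inv_commit_seqno_mono : forall t1 t2 i a b la lb h1 z1 h2 z2, t1 < t2 ->
    onth (wlog w) t1 = Some (i, PCom a la h1 z1) ->
    onth (wlog w) t2 = Some (i, PCom b lb h2 z2) -> la < lb;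
  inv_pending_signed : forall i b, chalt (wcl w i) = false -> cu (wcl w i) = Some b ->
    exists t, onth (wlog w) t = Some (i, PInv b i) /\
      forall t2 a la h z, onth (wlog w) t2 = Some (i, PCom a la h z) -> t2 < t;
  inv_confirm_signed : forall k x q j, List.In (OConfirm Rsp k x q j) tr ->
    exists h z, List.In (j, PCom x q h z) (wlog w) /\ cH (wcl w k) q = h;
  inv_confirm_seqnos : forall k, map snd (confirms_seq tr k) = iota 1 (cc (wcl w k));
  inv_commit_signed : forall j o l, List.In (OCommit Rsp j o l) tr ->
    exists h z, List.In (j, PCom o l h z) (wlog w)
}.

Lemma cop_inv_init : cop_inv (winit n Op s0) [::].
Proof.
split=> //=.
- by exists id; split=> // t e; rewrite onth0n.
- by move=> a; rewrite onth0n.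
- by move=> a; rewrite onth0n.
- move=> i; exists [::]; split=> //= [l|t]; last by rewrite onth0n.
  by rewrite /cinit /= leqn0; case: eqP => // ->.
- by move=> t; rewrite onth0n.
- by move=> t1 t2 i a b la lb h1 z1 h2 z2 _; rewrite onth0n.
Qed.

Lemma cop_inv_frame w w' tr : cop_inv w tr -> wlog w' = wlog w ->
  (forall k, [/\ cu (wcl w' k) = cu (wcl w k), cc (wcl w' k) = cc (wcl w k),
     cH (wcl w' k) = cH (wcl w k) & (chalt (wcl w' k) = false -> chalt (wcl w k) = false)]) ->
  cop_inv w' (tr ++ [::]).
Proof.
rewrite cats0 => I El Hk; split; rewrite ?El.
- exact: (inv_embed I).
- exact: (inv_commit_pos_uniq I).
- by move=> j x l i; case: (Hk i) => -> _ _ _; exact: (inv_committed_not_pending I).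
- by move=> i x; case: (Hk i) => -> _ _ _; exact: (inv_pending_invoked I).
- exact: (inv_committed_invoked I).
- exact: (inv_res_after_commit I).
- by move=> i; case: (Hk i) => _ -> -> _; exact: (inv_view I).
- exact: (inv_commit_chain I).
- exact: (inv_commit_seqno_mono I).
- by move=> i b; case: (Hk i) => -> _ _ Hh /Hh; exact: (inv_pending_signed I).
- by move=> k x q j; case: (Hk k) => _ _ -> _; exact: (inv_confirm_signed I).
- by move=> k; case: (Hk k) => _ -> _ _; exact: (inv_confirm_seqnos I).
- exact: (inv_commit_signed I).
Qed.

Lemma confirm_signed_extend w tr k V H' V' : cop_inv w tr ->
  chain_view (cH (wcl w k)) V -> chain_view H' V' -> take (size V) V' = V ->
  forall x q j, List.In (OConfirm Rsp k x q j) tr ->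
    exists h z, List.In (j, PCom x q h z) (wlog w) /\ H' q = h.
Proof.
move=> I HV HV' Hpre x q j Hc; have [h [z [Hin Hh]]] := inv_confirm_signed I Hc.
exists h, z; split=> //; have [t Ht] := proj1 (In_onth _ _) Hin.
have [L [_ _ HL _]] := inv_commit_chain I Ht; rewrite HL in Hh *.
exact: (chain_view_mono HV HV' Hpre Hh).
Qed.

Lemma cop_inv_invoke w tr i o :
  cop_inv w tr -> uniq (invoked_ops (tr ++ [:: OInv Rsp i o])) -> cu (wcl w i) = None ->
  cop_inv (setcl w i (CState (Some o) (cc (wcl w i)) (cH (wcl w i)) (cZ (wcl w i))
                             (cs (wcl w i)) (chalt (wcl w i)))
            (if chalt (wcl w i) then wlog w else rcons (wlog w) (i, PInv o i)))
          (tr ++ [:: OInv Rsp i o]).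
Proof.
move=> I Hu Hcu; have Hfresh := invoke_fresh Hu.
set log' := (if _ then _ else _).
have Hlog t e : onth (wlog w) t = Some e -> onth log' t = Some e.
  by move=> He; rewrite /log'; case: ifP => _ //; apply: onth_rconsl.
have Hlog' t j a l h z :
    onth log' t = Some (j, PCom a l h z) -> onth (wlog w) t = Some (j, PCom a l h z).
  by rewrite /log'; case: ifP => _ // Ht; case: (onth_rconsP Ht) => [//|[_ E]].
have Hin e : List.In e (wlog w) -> List.In e log'.
  by move=> He; rewrite /log'; case: ifP => _ //; apply: In_rconsl.
have Hnocom j x l : List.In (OCommit Rsp j x l) (tr ++ [:: OInv Rsp i o]) ->
    List.In (OCommit Rsp j x l) tr.
  by move=> Hc; case: (In_cat1P Hc).
split; rewrite /setcl /=.
- rewrite /log'; case: ifP => _; first exact: log_embeds_catr (inv_embed I).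
  by apply: log_embeds_rcons (inv_embed I) _ _.
- move=> a b j1 j2 x l1 l2 Ha Hb.
  case: (onth_cat1P Ha) => [{}Ha|[_ //]]; case: (onth_cat1P Hb) => [{}Hb|[_ //]].
  exact: (inv_commit_pos_uniq I Ha Hb).
- move=> j x l k /Hnocom Hc; case: eqP => [_ [Ex]|_]; last exact: (inv_committed_not_pending I Hc).
  by subst x; apply: Hfresh (inv_committed_invoked I Hc).
- move=> k x; case: eqP => [->|_] Hk; first by case: Hk => <-; apply/In_cat; right; left.
  exact/In_catl/(inv_pending_invoked I Hk).
- by move=> j x l /Hnocom Hc; apply/In_catl/(inv_committed_invoked I Hc).
- move=> a k o' r Ha.
  case: (onth_cat1P Ha) => [/(inv_res_after_commit I) [l [H1 H2]]|[_ //]].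
  by exists l; rewrite (onth_catl _ H2).
- move=> k; have [V [H1 H2 H3 H4]] := inv_view I k; exists V; split.
  + by case: eqP => [Ek|]; [subst k|].
  + by case: eqP => [Ek|]; [subst k|].
  + by move=> x /H3; apply: Hin.
  + by move=> t a la h z /Hlog' /H4.
- move=> t j a l h z /Hlog' /(inv_commit_chain I) [L [H1 H2 H3 H4]].
  by exists L; split=> // x /H4 [t' [Ht' He]]; exists t'; split=> //; apply: Hlog.
- move=> t1 t2 k a b la lb h1 z1 h2 z2 Hlt /Hlog' H1 /Hlog' H2.
  exact: (inv_commit_seqno_mono I Hlt H1 H2).
- move=> k b; case: eqP => [->|Hne] Hh.
  + move=> [<-]; exists (size (wlog w)); rewrite /log' Hh onth_rcons_size; split=> //.
    move=> t2 a la h z Ht2; case: (onth_rconsP Ht2) => [H0|[_ //]].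
    exact: onth_lt H0.
  + move=> Hb; have [t [Ht Hall]] := inv_pending_signed I Hh Hb.
    by exists t; split; [exact: Hlog | move=> t2 a la h z /Hlog'; apply: Hall].
- move=> k x q j Hc0; case: (In_cat1P Hc0) => [Hc|//]; have [h [z [H1 H2]]] := inv_confirm_signed I Hc.
  by exists h, z; split; [apply: Hin | case: eqP => [Ek|]; [subst k|]].
- move=> k; rewrite confirms_seq_cat /= cats0 (inv_confirm_seqnos I k).
  by case: eqP => [Ek|]; [subst k|].
- by move=> j x l /Hnocom /(inv_commit_signed I) [h [z Hc]]; exists h, z; apply: Hin.
Qed.

Lemma scan_view_reply i log c H Z V om u j tau H' g m ok :
  chain_view H V -> c <= size V -> (forall x, x \in V -> signed_invoke log x) ->
  scan i log c 1 H Z (rcons om (u, j, tau)) = (H', g, m, ok) -> ok ->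
  let l := c + size (rcons om (u, j, tau)) in
  exists V', [/\ chain_view H' V', take (size V) V' = V, l <= size V',
     (forall x, x \in V' -> signed_invoke log x) &
     take l V' = rcons (take l.-1 V') (u, j)].
Proof.
move=> HV Hc HP Hscan Hok l.
have [|V' [HV' Hpre Hsize HP' Hpos]] := scan_view HV _ (ltn0Sn 0) HP Hscan Hok.
  by rewrite addn1.
exists V'; split=> //; first by move: Hsize; rewrite /l addn1.
have := Hpos (size om) u j tau; rewrite -cats1 onth_cat ltnn subnn /= => /(_ erefl).
by have -> : l = c + 1 + size om by rewrite /l size_rcons; lia.
Qed.

(* A client's new commit carries a sequence number above all its earlier ones: an earlier
   commit certifying position l would contain the pending invocation, which was signed
   only after that commit. *)
Lemma own_commit_seqno_lt w tr i u V l t a la h z :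
  cop_inv w tr -> uniq (invoked_ops tr) ->
  chalt (wcl w i) = false -> cu (wcl w i) = Some u ->
  commits_certify (wlog w) i V ->
  take l V = rcons (take l.-1 V) (u, i) ->
  onth (wlog w) t = Some (i, PCom a la h z) -> l <= la -> False.
Proof.
move=> I Hu Hh Hcu Hown Hlast Ht Hle.
have [_ Hh1] := Hown _ _ _ _ _ Ht.
have [L [_ _ HL1 HL2]] := inv_commit_chain I Ht.
have EL : rcons L (a, i) = take la V by apply: chain_inj; rewrite HL1 in Hh1; case: Hh1.
have Hmem : (u, i) \in rcons L (a, i).
  by rewrite EL; apply: (mem_take (n0 := l)); rewrite take_takel // Hlast mem_rcons_self.
have [t' [Ht't Ht']] := HL2 _ Hmem.
have [tu [Htu Hbefore]] := inv_pending_signed I Hh Hcu.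
have Etu := invoke_sig_pos_uniq (inv_embed I) Hu Ht' Htu; subst tu.
by move: (ltn_trans Ht't (Hbefore _ _ _ _ _ Ht)); rewrite ltnn.
Qed.

Lemma cop_inv_reply w tr i om u tau z r H' g m ok l :
  cop_inv w tr -> uniq (invoked_ops tr) -> chalt (wcl w i) = false ->
  scan i (wlog w) (cc (wcl w i)) 1 (cH (wcl w i)) (cZ (wcl w i)) (rcons om (u, i, tau))
    = (H', g, m, ok) ->
  ok -> cu (wcl w i) = Some u ->
  l = cc (wcl w i) + size (rcons om (u, i, tau)) ->
  cop_inv (setcl w i (CState None (cc (wcl w i)) H' (upd (cZ (wcl w i)) l (Some z))
                             (cs (wcl w i)) false)
                   (rcons (wlog w) (i, PCom u l (H' l) z)))
          (tr ++ [:: OCommit Rsp i u l; ORes i u r]).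
Proof.
move=> I Hu Hh Hscan Hok Hcu El.
have [V [Hcc HV HP Hown]] := inv_view I i.
have [V' [HV' Hpre HlV' HP' Hlast]] := scan_view_reply HV Hcc HP Hscan Hok.
rewrite -El in HlV' Hlast.
have Hown' := commits_certify_prefix Hpre Hown.
set log := wlog w; set x := (i, PCom u l (H' l) z).
have Hlog t e : onth log t = Some e -> onth (rcons log x) t = Some e by apply: onth_rconsl.
have Hin e : List.In e log -> List.In e (rcons log x) by apply: In_rconsl.
split; rewrite /setcl /=.
- by apply: log_embeds_rcons (inv_embed I) _ _.
- move=> a b j1 j2 y l1 l2 Ha Hb.
  have Hnew c j' l' : onth tr c = Some (OCommit Rsp j' u l') -> False.
    by move=> Hc'; apply: (inv_committed_not_pending I _ Hcu); apply/In_onth; exists c; exact: Hc'.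
  case: (onth_cat2P Ha) => [{}Ha|[[-> [_ Ey _]]|[_ //]]];
  case: (onth_cat2P Hb) => [{}Hb|[[-> [_ Ey' _]]|[_ //]]] //.
  + exact: (inv_commit_pos_uniq I Ha Hb).
  + by subst y; case: (Hnew _ _ _ Ha).
  + by subst y; case: (Hnew _ _ _ Hb).
- move=> j y l' k Hc; case: eqP => [_|Hne] //.
  case: (In_cat2P Hc) => [Hc'|[[_ -> _]|//]]; first exact: (inv_committed_not_pending I Hc').
  move=> Hk; apply: Hne.
  exact: (invoke_client_uniq Hu (inv_pending_invoked I Hk) (inv_pending_invoked I Hcu)).
- move=> k y; case: eqP => [_|_] // Hk.
  exact/In_catl/(inv_pending_invoked I Hk).
- move=> j y l' Hc; apply: In_catl; case: (In_cat2P Hc) => [Hc'|[[-> -> _]|//]].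
  + exact: (inv_committed_invoked I Hc').
  + exact: (inv_pending_invoked I Hcu).
- move=> a k o' r' Ha; case: (onth_cat2P Ha) => [{}Ha|[[_ //]|[Ea [Ek Eo _]]]].
  + have [l' [H1 H2]] := inv_res_after_commit I Ha.
    by exists l'; split=> //; exact: onth_catl H2.
  + by subst a k o'; exists l; rewrite /= onth_cat_size.
- move=> k; case: eqP => [Ek|Hne].
  + subst k; exists V'; split=> //.
    * exact: leq_trans Hcc (size_prefix Hpre).
    * by move=> y /HP'; apply: Hin.
    * move=> t a la h z' Ht; case: (onth_rconsP Ht) => [/Hown' //|[_ [_ -> -> _]]].
      by rewrite HV' HlV'.
  + have [W [H1 H2 H3 H4]] := inv_view I k; exists W; split=> //.
    * by move=> y /H3; apply: Hin.
    * move=> t a la h z' Ht; case: (onth_rconsP Ht) => [/H4 //|[_ [Ek _]]].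
      by case: Hne.
- move=> t j a la h z' Ht; case: (onth_rconsP Ht) => [{}Ht|[-> [-> -> -> -> _]]].
  + have [L [H1 H2 H3 H4]] := inv_commit_chain I Ht.
    by exists L; split=> // y /H4 [t' [Ht'' Hy]]; exists t'; split=> //; apply: Hlog.
  + exists (take l.-1 V'); split.
    * by rewrite El size_rcons addnS.
    * by rewrite size_takel //; apply: leq_trans (leq_pred _) HlV'.
    * by rewrite -Hlast HV' HlV'.
    * move=> y; rewrite -Hlast => /mem_take /HP' /In_onth [t' Ht'].
      by exists t'; split; [exact: onth_lt Ht' | apply: Hlog].
- move=> t1 t2 k a b la lb h1 z1 h2 z2 Hlt Ht1 Ht2.
  have Ht1' : onth log t1 = Some (k, PCom a la h1 z1).
    case: (onth_rconsP Ht1) => [//|[Et _]].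
    by move: (onth_lt Ht2) Hlt; rewrite size_rcons Et; lia.
  case: (onth_rconsP Ht2) => [Ht2'|[_ [Ek _ -> _ _]]].
  + exact: (inv_commit_seqno_mono I Hlt Ht1' Ht2').
  + subst k; by rewrite ltnNge; apply/negP; apply: own_commit_seqno_lt I Hu Hh Hcu Hown' Hlast Ht1'.
- move=> k b; case: eqP => [_|Hne] // Hh' Hb.
  have [t [Ht Hall]] := inv_pending_signed I Hh' Hb; exists t; split; first exact: Hlog.
  move=> t2 a la h z' Ht2; case: (onth_rconsP Ht2) => [/Hall //|[_ [Ek _]]].
  by case: Hne.
- move=> k y q j Hc; case: (In_cat2P Hc) => [{}Hc|[//|//]].
  case: eqP => [Ek|_]; last first.
    by have [h [z' [H1 H2]]] := inv_confirm_signed I Hc; exists h, z'; split; first exact: Hin.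
  subst k; have [h [z' [H1 H2]]] := confirm_signed_extend I HV HV' Hpre Hc.
  by exists h, z'; split; first exact: Hin.
- move=> k; rewrite confirms_seq_cat /= cats0 (inv_confirm_seqnos I k).
  by case: eqP => [Ek|]; [subst k|].
- move=> j y l' Hc; case: (In_cat2P Hc) => [{}Hc|[[-> -> ->]|//]].
  + by have [h [z' H1]] := inv_commit_signed I Hc; exists h, z'; apply: Hin.
  + by exists (H' l), z; apply/In_rcons; right.
Qed.

Lemma cop_inv_bcast w tr i o q h z phi j s' :
  cop_inv w tr -> chalt (wcl w i) = false -> q = cc (wcl w i) + 1 ->
  verify (wlog w) j phi (PCom o q h z) ->
  let H1 := if cH (wcl w i) q is None
            then upd (cH (wcl w i)) q (Some (Hash (cH (wcl w i) (q - 1)) o q j))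
            else cH (wcl w i) in
  h = H1 q ->
  cop_inv (setcl w i (CState (cu (wcl w i)) q H1 (cZ (wcl w i)) s' false) (wlog w))
          (tr ++ [:: OConfirm Rsp i o q j]).
Proof.
move=> I Hh Eq [_ Hv] H1 Eh.
have [t Ht] := proj1 (In_onth _ _) Hv.
have [L [Hq0 _ _ HL3]] := inv_commit_chain I Ht.
have Hoj : signed_invoke (wlog w) (o, j).
  have [t' [_ Ht']] := HL3 (o, j) (mem_rcons_self _ _).
  by apply/In_onth; exists t'.
have [V [Hcc HV HP Hown]] := inv_view I i.
have Hq : 0 < q <= (size V).+1 by rewrite Eq; lia.
set V' := if q <= size V then V else rcons V (o, j).
have HV' : chain_view H1 V' := chain_view_extend o j HV Hq.
have Hpre : take (size V) V' = V.
  by rewrite /V'; case: ifP => _; rewrite ?take_rcons_le // take_size.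
have HqV' : q <= size V' by rewrite /V'; case: ifP => // _; rewrite size_rcons; lia.
have HP' : forall x, x \in V' -> signed_invoke (wlog w) x.
  rewrite /V'; case: ifP => _ x; first exact: HP.
  by rewrite mem_rcons inE => /orP [/eqP -> //|/HP].
split; rewrite /setcl /=.
- exact: log_embeds_catr (inv_embed I).
- move=> a b j1 j2 x l1 l2 Ha Hb.
  case: (onth_cat1P Ha) => [{}Ha|[_ //]]; case: (onth_cat1P Hb) => [{}Hb|[_ //]].
  exact: (inv_commit_pos_uniq I Ha Hb).
- move=> j' x l k Hc; case: (In_cat1P Hc) => [{}Hc|//].
  by case: eqP => [Ek|_]; [subst k|]; exact: (inv_committed_not_pending I Hc).
- move=> k x; case: eqP => [Ek|_]; [subst k|] => Hk; apply: In_catl.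
  + exact: (inv_pending_invoked I Hk).
  + exact: (inv_pending_invoked I Hk).
- move=> j' x l Hc; case: (In_cat1P Hc) => [{}Hc|//]; apply: In_catl.
  exact: (inv_committed_invoked I Hc).
- move=> a k o' r' Ha; case: (onth_cat1P Ha) => [{}Ha|[_ //]].
  have [l' [H3 H4]] := inv_res_after_commit I Ha.
  by exists l'; split=> //; exact: onth_catl H4.
- move=> k; case: eqP => [Ek|Hne]; last exact: (inv_view I k).
  by subst k; exists V'; split=> //; exact: commits_certify_prefix Hpre Hown.
- exact: (inv_commit_chain I).
- exact: (inv_commit_seqno_mono I).
- move=> k b; case: eqP => [Ek|_]; [subst k|] => Hh' Hb; exact: (inv_pending_signed I _ Hb).
- move=> k x q' j' Hc; case: (In_cat1P Hc) => [{}Hc|[Ek Ex Eq' Ej]].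
  + case: eqP => [Ek|_]; last exact: (inv_confirm_signed I Hc).
    by subst k; exact: (confirm_signed_extend I HV HV' Hpre Hc).
  + by subst k x q' j'; exists h, z; rewrite eqxx.
- move=> k; rewrite confirms_seq_cat /=; case: eqP => [Ek|Hne].
  + subst k; rewrite eqxx map_cat (inv_confirm_seqnos I i) /= Eq.
    by rewrite iotaD /= add1n addn1.
  + case: eqP => [Ek|_]; first by case: Hne.
    by rewrite cats0 (inv_confirm_seqnos I k).
- move=> j' x l Hc; case: (In_cat1P Hc) => [{}Hc|//].
  exact: (inv_commit_signed I Hc).
Qed.

Lemma cop_inv_reachable w tr : reachable F s0 w tr -> uniq (invoked_ops tr) -> cop_inv w tr.
Proof.
elim=> [|w0 tr0 w1 ev Hr IH Hs] Hu; first exact: cop_inv_init.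
have I := IH (uniq_invoked_catl Hu).
case: Hs Hu I => {w1 ev}.
- by move=> v i o Hcu /= Hu I; apply: cop_inv_invoke.
- move=> v i om u tau z r H' g m ok /= Hh Hscan Hok Hcu _ Hu I.
  exact: cop_inv_reply I (uniq_invoked_catl Hu) Hh Hscan Hok Hcu erefl.
- move=> v i om H' g m ok /= Hh _ _ _ I; apply: cop_inv_frame I _ _ => // k.
  by rewrite /setcl /=; case: eqP => [->|].
- move=> v i o q h z phi j /= Hh Eq Hv Eh _ I.
  exact: (cop_inv_bcast _ I Hh Eq Hv Eh).
- move=> v i o q h z phi j /= Hh _ _ I; apply: cop_inv_frame I _ _ => // k.
  by rewrite /setcl /=; case: eqP => [->|].
Qed.

Lemma confirms_map_fst (tr : seq obsT) k : confirms tr k = map fst (confirms_seq tr k).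
Proof.
elim: tr => [|e tr IH] //=; rewrite /confirms /confirms_seq /= in IH *.
by case: e => //= k' o q j; case: eqP => _ //=; rewrite IH.
Qed.

Lemma confirms_seq_In (tr : seq obsT) k x q : (x, q) \in confirms_seq tr k ->
  exists j, List.In (OConfirm Rsp k x q j) tr.
Proof.
elim: tr => [|e tr IH] //=; rewrite /confirms_seq /= in IH *.
case: e => [? ?|? ? ?|? ? ?|k' o q' j] /=; try by move/IH => [j Hj]; exists j; right.
case: eqP => [->|_] /=; last by move/IH => [j' Hj]; exists j'; right.
rewrite inE => /orP [/eqP [-> ->]|/IH [j' Hj]]; first by exists j; left.
by exists j'; right.
Qed.

Lemma confirms_In (tr : seq obsT) k x q j :
  List.In (OConfirm Rsp k x q j) tr -> x \in confirms tr k.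
Proof.
elim: tr => [|e tr IH] //= [->|/IH]; rewrite /confirms /=; first by rewrite eqxx inE eqxx.
by case: e => //= k' *; case: eqP => _ //=; rewrite inE; apply/orP; right.
Qed.

Lemma commits_of_In (tr : seq obsT) i x l : (x, l) \in commits_of tr i ->
  List.In (OCommit Rsp i x l) tr.
Proof.
elim: tr => [|e tr IH] //=; rewrite /commits_of /= in IH *.
case: e => [? ?|? ? ?|i' o l'|? ? ? ?] /=; try by move=> Hm; right; apply: IH.
case: eqP => [->|_] /=; last by move/IH; right.
by rewrite inE => /orP [/eqP [-> ->]|/IH]; [left|right].
Qed.

Lemma commits_sortedP (tr : seq obsT) i P x : x \in commits_sorted tr i P ->
  exists2 l, P l & List.In (OCommit Rsp i x l) tr.
Proof.
rewrite /commits_sorted => /mapP [[y l] Hy ->] /=.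
move: Hy; rewrite mem_sort mem_filter => /andP [HP Hc].
by exists l => //; apply: commits_of_In.
Qed.

Section Reachable.
Variables (w : wT) (tr : seq obsT).
Hypotheses (I : cop_inv w tr) (Hu : uniq (invoked_ops tr)).

(* The heart of the real-time argument: commit(o) < response(o) < invoke(o') in the trace,
   and the log embeds monotonically into the trace. *)
Lemma commit_sig_before_invoke_sig o o' t t' j j' l h z :
  completes_before tr o o' ->
  onth (wlog w) t' = Some (j', PInv o' j') -> onth (wlog w) t = Some (j, PCom o l h z) ->
  t' < t -> False.
Proof.
move=> [tr1 [tr2 [tr3 [i0 [j0 [r Etr]]]]]] E1 E2 Hlt.
have [phi [H1 H2]] := inv_embed I.
have [e1 [F1 [_ K1]]] := H1 _ _ E1; have [e2 [F2 K2]] := H1 _ _ E2; rewrite /= in K2; subst e1 e2.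
have Hmono := H2 _ _ Hlt (onth_lt E2).
have Hres : onth tr (size tr1) = Some (ORes i0 o r) by rewrite Etr onth_cat_size.
have Hinv : onth tr (size tr1 + (size tr2).+1) = Some (OInv Rsp j0 o').
  by rewrite Etr onth_cat ltnNge leq_addr /= addKn /= onth_cat_size.
have Eb := invoke_pos_uniq Hu F1 Hinv.
have [l0 [Hpos Hc]] := inv_res_after_commit I Hres.
have Ea := inv_commit_pos_uniq I F2 Hc.
by move: Hmono; rewrite Eb Ea; lia.
Qed.

Definition has_commit_sig x := exists t j l h z, onth (wlog w) t = Some (j, PCom x l h z).

Lemma completes_before_neq o o' : completes_before tr o o' -> has_commit_sig o -> o <> o'.
Proof.
move=> Hcb [t [j [l [h [z Ht]]]]] E; subst o'.
have [L [_ _ _ HL]] := inv_commit_chain I Ht.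
have [t' [Hlt Ht']] := HL _ (mem_rcons_self L (o, j)).
exact: commit_sig_before_invoke_sig Hcb Ht' Ht Hlt.
Qed.

Lemma confirm_chain k V x q j : chain_view (cH (wcl w k)) V ->
  List.In (OConfirm Rsp k x q j) tr ->
  exists t h z, [/\ onth (wlog w) t = Some (j, PCom x q h z),
     take q V = rcons (take q.-1 V) (x, j) &
     forall y, y \in take q V ->
       exists t', t' < t /\ onth (wlog w) t' = Some (y.2, PInv y.1 y.2)].
Proof.
move=> HV Hc.
have [h [z [Hin Hh]]] := inv_confirm_signed I Hc.
have [t Ht] := proj1 (In_onth _ _) Hin.
have [L [Hq HL1 HL2 HL3]] := inv_commit_chain I Ht.
move: Hh; rewrite HV HL2; case: ifP => // Hqs [] /chain_inj EL.
exists t, h, z; split=> //; last by rewrite EL.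
rewrite EL; congr rcons.
by rewrite -(take_takel V (leq_pred q)) EL -cats1 take_size_cat.
Qed.

Lemma confirm_nth k x0 a : a < size (confirms tr k) ->
  exists j, List.In (OConfirm Rsp k (nth x0 (confirms tr k) a) a.+1 j) tr.
Proof.
rewrite confirms_map_fst size_map => Ha.
set CQ := confirms_seq tr k.
have E2 : (nth (x0, 0) CQ a).2 = a.+1.
  rewrite -(nth_map (x0, 0) 0 snd Ha) (inv_confirm_seqnos I k) nth_iota ?add1n //.
  by rewrite -(size_iota 1 (cc (wcl w k))) -(inv_confirm_seqnos I k) size_map.
have Hm : ((nth (x0, 0) CQ a).1, (nth (x0, 0) CQ a).2) \in CQ.
  by rewrite -surjective_pairing mem_nth.
have [j Hj] := confirms_seq_In Hm.
by exists j; rewrite (nth_map (x0, 0)) // -E2.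
Qed.

Lemma confirm_index k x : x \in confirms tr k ->
  exists j, List.In (OConfirm Rsp k x (index x (confirms tr k)).+1 j) tr.
Proof.
move=> Hx; have Ha : index x (confirms tr k) < size (confirms tr k) by rewrite index_mem.
by have [j] := confirm_nth x Ha; rewrite nth_index //; exists j.
Qed.

Lemma confirmed_has_commit_sig k x : x \in confirms tr k -> has_commit_sig x.
Proof.
move=> /confirm_index [j Hc]; have [h [z [Hin _]]] := inv_confirm_signed I Hc.
have [t Ht] := proj1 (In_onth _ _) Hin.
by exists t, j, (index x (confirms tr k)).+1, h, z.
Qed.

Lemma committed_has_commit_sig i P x : x \in commits_sorted tr i P -> has_commit_sig x.
Proof.
move=> /commits_sortedP [l _ Hc]; have [h [z Hin]] := inv_commit_signed I Hc.
by have [t Ht] := proj1 (In_onth _ _) Hin; exists t, i, l, h, z.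
Qed.

Lemma confirmed_prefix_signed k x y : x \in confirms tr k -> y \in confirms tr k ->
  index y (confirms tr k) <= index x (confirms tr k) ->
  exists t j h z, onth (wlog w) t = Some (j, PCom x (index x (confirms tr k)).+1 h z) /\
    exists t' j', t' < t /\ onth (wlog w) t' = Some (j', PInv y j').
Proof.
set C := confirms tr k => Hx Hy Hyx.
have [V [_ HV _ _]] := inv_view I k.
have [j Hc] := confirm_index Hx; have [t [h [z [Ht _ Hpre]]]] := confirm_chain HV Hc.
have [j' Hc'] := confirm_index Hy; have [_ [_ [_ [_ Hlast' _]]]] := confirm_chain HV Hc'.
have Hm : (y, j') \in take (index x C).+1 V.
  apply: (mem_take (n0 := (index y C).+1)).
  by rewrite take_takel // Hlast' mem_rcons_self.
have [t' [Hlt Ht']] := Hpre _ Hm.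
by exists t, j, h, z; split=> //; exists t', j'.
Qed.

Lemma commit_sig_committed t j x l h z i l' :
  onth (wlog w) t = Some (j, PCom x l h z) -> List.In (OCommit Rsp i x l') tr ->
  j = i /\ l = l'.
Proof.
move=> Ht /In_onth [b Hb]; have [phi [Hphi _]] := inv_embed I.
have [e [Fe Ke]] := Hphi _ _ Ht; rewrite /= in Ke; subst e.
have Eb := inv_commit_pos_uniq I Fe Hb; subst b.
by rewrite Hb in Fe; case: Fe => -> ->.
Qed.

Lemma confirms_real_time k o o' : completes_before tr o o' ->
  o \in confirms tr k -> o' \in confirms tr k ->
  ~ index o' (confirms tr k) < index o (confirms tr k).
Proof.
move=> Hcb Ho Ho' /ltnW Hlt.
have [t [j [h [z [Ht [t' [j' [Hlt' Ht']]]]]]]] := confirmed_prefix_signed Ho Ho' Hlt.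
exact: commit_sig_before_invoke_sig Hcb Ht' Ht Hlt'.
Qed.

(* The confirmed prefix ends with C_i's commit of omax; an operation o committed by C_i
   with a higher sequence number was committed later, hence after every invocation in
   that prefix. *)
Lemma confirmed_prefix_before_later_commit i k omax lmax o o' l :
  completes_before tr o o' -> committed tr i omax lmax -> confirmed_by tr k omax ->
  List.In (OCommit Rsp i o l) tr -> lmax < l ->
  ~ o' \in take (index omax (confirms tr k)).+1 (confirms tr k).
Proof.
move=> Hcb Hcm [q0 [j0 Hcf]] Hco Hl Ho'.
have Hom := confirms_In Hcf.
have Hidx : index o' (confirms tr k) <= index omax (confirms tr k).
  by rewrite -ltnS; apply: index_ltn.
have [tm [jm [hm [zm [Htm [t' [j' [Hlt' Ht']]]]]]]] :=
  confirmed_prefix_signed Hom (mem_take Ho') Hidx.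
have [Ejm Elm] := commit_sig_committed Htm Hcm; subst jm.
have [ho [zo Hino]] := inv_commit_signed I Hco.
have [to Hto] := proj1 (In_onth _ _) Hino.
case: (ltngtP tm to) => Hcmp.
- exact: commit_sig_before_invoke_sig Hcb Ht' Hto (ltn_trans Hlt' Hcmp).
- by have := inv_commit_seqno_mono I Hcmp Hto Htm; rewrite Elm; lia.
- subst to; rewrite Htm in Hto; case: Hto => _ El _ _.
  by move: Hl; rewrite -El Elm ltnn.
Qed.

Lemma commits_sorted_real_time i P o o' : completes_before tr o o' -> o <> o' ->
  o \in commits_sorted tr i P -> o' \in commits_sorted tr i P ->
  ~ index o' (commits_sorted tr i P) < index o (commits_sorted tr i P).
Proof.
move=> Hcb Hne; rewrite /commits_sorted; set S := sort _ _ => Ho Ho' Hlt.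
have Hb : index o [seq x.1 | x <- S] < size S by rewrite -(size_map fst) index_mem.
have Hb' : index o' [seq x.1 | x <- S] < size S by rewrite -(size_map fst) index_mem.
set eb := nth (o, 0) S (index o [seq x.1 | x <- S]).
set eb' := nth (o, 0) S (index o' [seq x.1 | x <- S]).
have E1 : eb.1 = o by rewrite /eb -(nth_map (o, 0) o fst Hb) nth_index.
have E1' : eb'.1 = o' by rewrite /eb' -(nth_map (o, 0) o fst Hb') nth_index.
have Hle : eb'.2 <= eb.2.
  have Hsort : sorted (fun a b : Op * nat => a.2 <= b.2) S.
    by apply: sort_sorted => a b; exact: leq_total.
  apply: (sorted_leq_nth _ _ (o, 0) Hsort _ _ Hb' Hb (ltnW Hlt)).
  - by move=> y x z; apply: leq_trans.
  - by move=> x; apply: leqnn.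
have HS e : e \in S -> List.In (OCommit Rsp i e.1 e.2) tr.
  by case: e => y l; rewrite mem_sort mem_filter => /andP [_ /commits_of_In].
have [h [z Hc]] := inv_commit_signed I (HS _ (mem_nth (o, 0) Hb)).
have [h' [z' Hc']] := inv_commit_signed I (HS _ (mem_nth (o, 0) Hb')).
have [t Ht] := proj1 (In_onth _ _) Hc; have [t' Ht'] := proj1 (In_onth _ _) Hc'.
rewrite -/eb in Ht; rewrite -/eb' in Ht'.
case: (ltngtP t t') => Hcmp.
- by have := inv_commit_seqno_mono I Hcmp Ht Ht'; rewrite ltnNge Hle.
- have [L [_ _ _ HL]] := inv_commit_chain I Ht'.
  have [t'' [Hlt'' Ht'']] := HL _ (mem_rcons_self L (eb'.1, i)).
  rewrite E1' in Ht''; rewrite E1 in Ht.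
  exact: commit_sig_before_invoke_sig Hcb Ht'' Ht (ltn_trans Hlt'' Hcmp).
- subst t'; rewrite Ht in Ht'; case: Ht' => E _ _ _.
  by apply: Hne; rewrite -E1 -E1' E.
Qed.

End Reachable.

End COPProof.

Theorem lemma5 (n : nat) (Op : eqType) (St Rsp : Type) (F : St -> Op -> St * Rsp)
  (s0 : St) (w : world n Op St) (tr : seq (obs n Op Rsp)) :
  reachable F s0 w tr ->
  uniq (invoked_ops tr) ->
  forall (i : 'I_n) (p : seq Op), cop_pi tr i p ->
  forall o o' : Op, o \in p -> o' \in p ->
    completes_before tr o o' -> index o p < index o' p.
Proof.
move=> Hr Hu i p Hpi o o' Ho Ho' Hcb; have I := cop_inv_reachable Hr Hu.
case: Hpi => [[omax [lmax [k [Hcm [Hcf [_ ->]]]]]]|[_ ->]] in Ho Ho' *; last first.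
  have Hne := completes_before_neq I Hu Hcb (committed_has_commit_sig I Ho).
  exact: (index_lt_of_not_gt Ho Ho' Hne (commits_sorted_real_time I Hu Hcb Hne Ho Ho')).
set A := take _ (confirms tr k) in Ho Ho' *; set B := commits_sorted _ _ _ in Ho Ho' *.
have Hsig : has_commit_sig w o.
  move: Ho; rewrite mem_cat => /orP [/mem_take|] Ho.
  - exact: (confirmed_has_commit_sig I Ho).
  - exact: (committed_has_commit_sig I Ho).
have Hne := completes_before_neq I Hu Hcb Hsig.
rewrite !index_cat; case Hoa: (o \in A); case Ho'a: (o' \in A).
- rewrite /A !index_take_in //; have [HoC Ho'C] := (mem_take Hoa, mem_take Ho'a).
  exact: (index_lt_of_not_gt HoC Ho'C Hne (confirms_real_time I Hu Hcb HoC Ho'C)).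
- by rewrite ltn_addr // index_mem.
- move: Ho; rewrite mem_cat Hoa => /commits_sortedP [l Hl Hc].
  by case: (confirmed_prefix_before_later_commit I Hu Hcb Hcm Hcf Hc Hl Ho'a).
- move: Ho Ho'; rewrite !mem_cat Hoa Ho'a /= => HoB Ho'B; rewrite ltn_add2l.
  exact: (index_lt_of_not_gt HoB Ho'B Hne (commits_sorted_real_time I Hu Hcb Hne HoB Ho'B)).
Qed.
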